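(* Let $N\ge2$, let $G$ be a connected undirected graph with $N$ vertices, and let $L$ be its Laplacian. For $0<\gamma\le\lambda_2(L)$ define \[ \Gamma_\infty(\gamma):=\sup_{t\ge0}\|e^{\gamma t}(e^{-Lt}-\mathbf{1}\bar{\mathbf{1}})\|_\infty. \] Then: (a) for all $0<\gamma\le\lambda_2(L)$, $2-\frac2N\le\Gamma_\infty(\gamma)\le N-1$; (b) if $G$ is a complete graph, then $\lambda_2(L)=N$ and $\Gamma_\infty(\gamma)=2-\frac2N$ for all $0<\gamma\le N$.
   Context: $\mathbf{1}=(1,\dots,1)^\top\in\mathbb{R}^N$, $\bar{\mathbf{1}}=\frac1N\mathbf{1}^\top$; $\|\cdot\|_\infty$ is the matrix norm induced by the maximum norm (maximum absolute row sum); $\lambda_2(L)$ is the second smallest eigenvalue of $L$. *)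

From HB Require Import structures.
From mathcomp Require Import all_boot all_order all_algebra.
From mathcomp Require Import all_classical all_reals all_analysis.
Set Implicit Arguments. Unset Strict Implicit. Unset Printing Implicit Defensive.
Import Order.TTheory GRing.Theory Num.Theory numFieldNormedType.Exports.
Local Open Scope ring_scope.
Local Open Scope classical_set_scope.

Definition simple_graph (N : nat) (e : rel 'I_N) : Prop :=
  (forall i j, e i j = e j i) /\ (forall i, ~~ e i i).

Definition connected_graph (N : nat) (e : rel 'I_N) : Prop :=
  forall i j, connect e i j.

Definition complete_graph (N : nat) (e : rel 'I_N) : Prop :=
  forall i j, i != j -> e i j.

Definition laplacian (R : pzRingType) (N : nat) (e : rel 'I_N) : 'M[R]_N :=
  \matrix_(i, j) (if i == j then (#|[set k | e i k]|)%:R else - ((e i j)%:R)).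

Definition expm (R : realType) (n : nat) (A : 'M[R]_n) : 'M[R]_n :=
  \matrix_(i, j) limn (fun k : nat => (\sum_(l < k) (l`!%:R)^-1 *: A ^+ l) i j).

(* Induced infinity norm: maximum absolute row sum. *)
Definition norm_inf (R : realType) (m n : nat) (A : 'M[R]_(m, n)) : R :=
  \big[Num.max/0]_(i < m) \sum_(j < n) `|A i j|.

(* 1 * 1bar = the N x N matrix with all entries 1/N. *)
Definition avg_mx (R : realType) (N : nat) : 'M[R]_N := const_mx (N%:R)^-1.

Definition Gamma_inf (R : realType) (N : nat) (L : 'M[R]_N) (gamma : R) : \bar R :=
  ereal_sup [set (norm_inf (expR (gamma * t) *: (expm (- (t *: L)) - avg_mx R N)))%:E
            | t in [set t : R | 0 <= t]].

Definition is_lambda2 (R : realType) (N : nat) (M : 'M[R]_N) (l : R) : Prop :=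
  exists s : seq R,
    [/\ size s = N, sorted <=%R s,
        char_poly M = \prod_(a <- s) ('X - a%:P) & nth 0 s 1 = l].

From HB Require Import structures.
From mathcomp Require Import all_boot all_order all_algebra.
From mathcomp Require Import all_classical all_reals all_analysis.
From mathcomp Require Import complex.
From mathcomp Require Import ring lra.
Set Implicit Arguments. Unset Strict Implicit. Unset Printing Implicit Defensive.
Import Order.TTheory GRing.Theory Num.Theory numFieldNormedType.Exports.
Local Open Scope ring_scope.
Local Open Scope classical_set_scope.

(* The symmetric matrix L is diagonalised by a unitary U, so every entry of
   e^{-tL} is sum_m w_m(i,j) e^{-t r_m}, with r_m = [eigval m] the eigenvalues
   and w_m(i,j) = [eigweight m i j] = Re(conj(U_mi) U_mj) the entries of the
   spectral projectors.
   Zero row sums make 0 an eigenvalue; when it is simple (as lambda_2 > 0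
   forces) its eigenvector is constant and its projector is 1 1bar, which
   cancels in e^{-tL} - 1 1bar. At t = 0 the deviation is I - 1 1bar, whose
   rows have absolute sum 2 - 2/N. For gamma <= lambda_2 each remaining mode
   satisfies e^{gamma t} e^{-t r_m} <= 1, and |w_m(i,j)| <= (w_m(i,i) + w_m(j,j))/2
   bounds a row sum by sum_{m <> 0} sum_j (w_m(i,i) + w_m(j,j))/2 = N - 1.
   For the complete graph L = N I - 1 1^T satisfies L^2 = N L, so its
   eigenvalues lie in {0, N}; the trace N(N-1) forces exactly one zero, and the
   deviation is e^{(gamma-N)t} (I - 1 1bar), largest at t = 0. *)

Lemma char_poly_conj (F : fieldType) n (A V : 'M[F]_n) : V \in unitmx ->
  char_poly (invmx V *m A *m V) = char_poly A.
Proof.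
move=> Vu.
have conj_X : map_mx polyC (invmx V) *m 'X%:M *m map_mx polyC V = 'X%:M.
  by rewrite -mulmxA -scalar_mxC mulmxA -map_mxM mulVmx // map_mx1 mul1mx.
have conj_char_poly_mx : char_poly_mx (invmx V *m A *m V) =
    map_mx polyC (invmx V) *m char_poly_mx A *m map_mx polyC V.
  by rewrite /char_poly_mx mulmxBr mulmxBl -!map_mxM conj_X.
rewrite /char_poly conj_char_poly_mx !det_mulmx mulrAC -det_mulmx -map_mxM.
by rewrite mulVmx // map_mx1 det1 mul1r.
Qed.

Lemma scalemx_exprn (R : comPzRingType) n (a : R) (A : 'M[R]_n) k :
  (a *: A) ^+ k = a ^+ k *: A ^+ k.
Proof.
elim: k => [|k IH]; first by rewrite !expr0 scale1r.
by rewrite !exprSr IH -!mulmxE -scalemxAl -scalemxAr scalerA.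
Qed.

Section Unitary.
Local Open Scope sesquilinear_scope.

Lemma unitary_conj_inj (C : numClosedFieldType) n (U A B : 'M[C]_n) :
  U \is unitarymx -> U^t* *m A *m U = U^t* *m B *m U -> A = B.
Proof.
move=> Uu /(congr1 (fun X => U *m X *m U^t* )).
by rewrite !mulmxA (unitarymxP Uu) !mul1mx !(mulmxtVK _ Uu).
Qed.

Lemma trmxC_mul_unitary (C : numClosedFieldType) n (U : 'M[C]_n) :
  U \is unitarymx -> U^t* *m U = 1%:M.
Proof. by move=> Uu; rewrite -invmx_unitary // mulVmx ?unitarymx_unit. Qed.

End Unitary.

Lemma Re_conjM (R : rcfType) (a b : R[i]) :
  complex.Re (a^* * b) = complex.Re a * complex.Re b + complex.Im a * complex.Im b.
Proof. by case: a b => x y [u v] /=; ring. Qed.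

Lemma abs_Re_conjM_le (R : rcfType) (a b : R[i]) :
  `|complex.Re (a^* * b)| <= (complex.Re (a^* * a) + complex.Re (b^* * b)) / 2.
Proof.
rewrite !Re_conjM; case: a b => x y [u v] /=.
have := sqr_ge0 (x - u); have := sqr_ge0 (y - v).
have := sqr_ge0 (x + u); have := sqr_ge0 (y + v).
by rewrite ler_norml => *; apply/andP; split; nra.
Qed.

Lemma cvg_exp_partial_sums (R : realType) (x : R) :
  (fun k => \sum_(l < k) (l`!%:R)^-1 * x ^+ l) @ \oo --> expR x.
Proof.
have -> : (fun k => \sum_(l < k) (l`!%:R)^-1 * x ^+ l) = series (exp_coeff x).
  apply/funext => k; rewrite /series /= big_mkord; apply: eq_bigr => l _.
  by rewrite /exp_coeff /= mulrC.
exact: is_cvg_series_exp_coeff.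
Qed.

Lemma norm_inf_le (R : realType) n (A : 'M[R]_n) c :
  0 <= c -> (forall i, \sum_j `|A i j| <= c) -> norm_inf A <= c.
Proof.
move=> c0 H; rewrite /norm_inf; elim/big_ind: _ => // x y.
by rewrite ge_max => -> ->.
Qed.

Lemma row_sum_le_norm_inf (R : realType) n (A : 'M[R]_n) i :
  \sum_j `|A i j| <= norm_inf A.
Proof. by rewrite /norm_inf [X in _ <= X](bigD1 i) //= le_max lexx. Qed.

Section SymmetricSpectral.
Local Open Scope sesquilinear_scope.
Variables (R : realType) (N : nat) (L : 'M[R]_N).
Hypothesis Lsym : L^T = L.
Local Notation toC := (real_complex R).
Local Notation LC := (map_mx toC L).

Definition eigbasis : 'M[R[i]]_N := spectralmx LC.
Definition eigval (m : 'I_N) : R := complex.Re (spectral_diag LC 0 m).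
Definition eigweight (m i j : 'I_N) : R :=
  complex.Re ((eigbasis m i)^* * eigbasis m j).

Local Notation U := eigbasis.
Local Notation d := (spectral_diag LC).

Lemma eigbasis_unitary : U \is unitarymx.
Proof. exact: spectral_unitarymx. Qed.

Lemma hermsymmx_LC : LC \is hermsymmx.
Proof.
apply: realsym_hermsym.
  apply/is_hermitianmxP; rewrite expr0 scale1r.
  by apply/matrixP => i j; rewrite !mxE /= -[in LHS]Lsym mxE.
apply/mxOverP => i j; rewrite mxE realE !lecE /= eqxx /= -realE; exact: num_real.
Qed.

Lemma LC_spectral : LC = U^t* *m diag_mx d *m U.
Proof.
rewrite -invmx_unitary ?eigbasis_unitary //.
exact/orthomx_spectralP/hermitian_normalmx/hermsymmx_LC.
Qed.

Lemma spectral_diagE m : d 0 m = toC (eigval m).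
Proof.
have /mxOverP d_real := hermitian_spectral_diag_real hermsymmx_LC.
by rewrite /eigval RRe_real ?d_real.
Qed.

Lemma LC_exprn k : LC ^+ k = U^t* *m diag_mx (\row_m (d 0 m ^+ k)) *m U.
Proof.
elim: k => [|k IH].
  rewrite (_ : diag_mx _ = 1%:M) ?mulmx1 ?trmxC_mul_unitary ?eigbasis_unitary //.
  by apply/matrixP => i j; rewrite !mxE expr0.
rewrite exprSr IH -mulmxE [X in _ *m X = _]LC_spectral.
rewrite !mulmxA (mulmxtVK _ eigbasis_unitary) -[_ *m diag_mx d]mulmxA mulmx_diag.
by congr (_ *m diag_mx _ *m _); apply/rowP => m; rewrite !mxE exprSr.
Qed.

Lemma exprn_entry k i j : (L ^+ k) i j = \sum_m eigweight m i j * eigval m ^+ k.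
Proof.
have -> : (L ^+ k) i j = complex.Re ((LC ^+ k) i j) by rewrite -rmorphXn mxE.
rewrite LC_exprn mxE raddf_sum; apply: eq_bigr => m _.
rewrite mul_mx_diag !mxE spectral_diagE -rmorphXn mulrAC /eigweight.
by case: (_ * U m j) => a b /=; rewrite !mulr0 subr0.
Qed.

Lemma expm_spectral t :
  expm (- (t *: L)) = \matrix_(i, j) \sum_m eigweight m i j * expR (- t * eigval m).
Proof.
apply/matrixP => i j; rewrite !mxE; apply: cvg_lim => //.
have partial_sumE k : (\sum_(l < k) (l`!%:R)^-1 *: (- (t *: L)) ^+ l) i j =
    \sum_m eigweight m i j * \sum_(l < k) (l`!%:R)^-1 * (- t * eigval m) ^+ l.
  rewrite summxE; under eq_bigr => l _.
    by rewrite -scaleNr scalemx_exprn !mxE exprn_entry mulrA big_distrr; over.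
  rewrite exchange_big /=; apply: eq_bigr => m _.
  by rewrite big_distrr /=; apply: eq_bigr => l _; rewrite exprMn /=; ring.
under eq_fun do rewrite partial_sumE.
apply: cvg_big => [|m _]; first exact: add_continuous.
by apply: cvgMl_tmp; exact: cvg_exp_partial_sums.
Qed.

Lemma eigweight_sum i j : \sum_m eigweight m i j = (i == j)%:R.
Proof.
transitivity (complex.Re ((U^t* *m U) i j)).
  by rewrite mxE raddf_sum; apply: eq_bigr => m _; rewrite !mxE.
by rewrite trmxC_mul_unitary ?eigbasis_unitary // mxE; case: (i == j).
Qed.

Lemma eigweight_trace m : \sum_j eigweight m j j = 1.
Proof.
transitivity (complex.Re ((U *m U^t*) m m)).
  by rewrite mxE raddf_sum; apply: eq_bigr => j _; rewrite /eigweight !mxE mulrC.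
by rewrite (unitarymxP eigbasis_unitary) mxE eqxx.
Qed.

Lemma abs_eigweight_le m i j :
  `|eigweight m i j| <= (eigweight m i i + eigweight m j j) / 2.
Proof. exact: abs_Re_conjM_le. Qed.

Lemma char_poly_eigval : char_poly L = \prod_m ('X - (eigval m)%:P).
Proof.
apply: (@map_poly_inj _ _ toC); rewrite map_char_poly LC_spectral.
rewrite -invmx_unitary ?eigbasis_unitary // char_poly_conj ?unitarymx_unit ?eigbasis_unitary //.
rewrite char_poly_trig ?diag_mx_is_trig // rmorph_prod.
by apply: eq_bigr => m _ /=; rewrite map_polyXsubC mxE eqxx mulr1n spectral_diagE.
Qed.

Lemma sum_eigval : \sum_m eigval m = \tr L.
Proof.
apply: (@complexI R); rewrite rmorph_sum -trace_map_mx LC_spectral.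
rewrite mxtrace_mulC mulmxA (unitarymxP eigbasis_unitary) mul1mx mxtrace_diag.
by apply: eq_bigr => m _; rewrite spectral_diagE.
Qed.

Lemma eigval_sqr_scale a : L *m L = a *: L -> forall m, eigval m = 0 \/ eigval m = a.
Proof.
move=> LLa m.
have : LC ^+ 2 = toC a *: LC.
  rewrite -rmorphXn expr2 -mulmxE LLa.
  by apply/matrixP => i j; rewrite !mxE rmorphM.
rewrite LC_exprn [in RHS]LC_spectral scalemxAl scalemxAr.
move/(unitary_conj_inj eigbasis_unitary)/matrixP/(_ m m).
rewrite !mxE eqxx !mulr1n spectral_diagE -rmorphXn -rmorphM => /complexI/eqP.
rewrite expr2 -subr_eq0 -mulrBl mulf_eq0 subr_eq0.
by case/orP => /eqP; [right|left].
Qed.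

End SymmetricSpectral.

Section ZeroRowSums.
Local Open Scope sesquilinear_scope.
Variables (R : realType) (N : nat) (L : 'M[R]_N).
Hypotheses (Lsym : L^T = L) (Lrow : forall i, \sum_j L i j = 0).
Local Notation toC := (real_complex R).
Local Notation U := (eigbasis L).

Lemma eigvec_sum_eq0 m : eigval L m != 0 -> \sum_j U m j = 0.
Proof.
move=> nz.
have UL : U *m map_mx toC L = diag_mx (spectral_diag (map_mx toC L)) *m U.
  by rewrite {1}(LC_spectral Lsym) !mulmxA (unitarymxP (eigbasis_unitary L)) mul1mx.
have lhs : \sum_j (U *m map_mx toC L) m j = 0.
  under eq_bigr do rewrite mxE.
  rewrite exchange_big big1 // => k _; rewrite -mulr_sumr.
  under eq_bigr do rewrite mxE.
  by rewrite -rmorph_sum Lrow rmorph0 mulr0.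
have rhs : \sum_j (diag_mx (spectral_diag (map_mx toC L)) *m U) m j =
    toC (eigval L m) * \sum_j U m j.
  by rewrite mulr_sumr; apply: eq_bigr => j _; rewrite mul_diag_mx mxE spectral_diagE.
move: lhs; rewrite UL rhs => /eqP; rewrite mulf_eq0 fmorph_eq0 (negbTE nz).
by move/eqP.
Qed.

Lemma eigvec_sum_conj i : \sum_m (U m i)^* * \sum_j U m j = 1.
Proof.
transitivity (\sum_j (U^t* *m U) i j).
  under eq_bigr do rewrite mulr_sumr.
  rewrite exchange_big /=; apply: eq_bigr => j _; rewrite mxE.
  by apply: eq_bigr => m _; rewrite !mxE.
rewrite trmxC_mul_unitary ?eigbasis_unitary // (bigD1 i) //= big1 ?addr0.
  by rewrite mxE eqxx.
by move=> j /negbTE ji; rewrite mxE eq_sym ji.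
Qed.

Lemma exists_eigval_eq0 : (0 < N)%N -> exists m0, eigval L m0 = 0.
Proof.
move=> N_gt0; apply/not_existsP => nz.
have := eigvec_sum_conj (Ordinal N_gt0); rewrite big1 => [/esym/eqP|m _].
  by rewrite oner_eq0.
by rewrite eigvec_sum_eq0 ?mulr0 //; apply/eqP/nz.
Qed.

Variable m0 : 'I_N.
Hypothesis simple0 : forall m, (eigval L m == 0) = (m == m0).

Lemma eigweight_kernel i j : eigweight L m0 i j = N%:R^-1.
Proof.
have conj_sum k : (U m0 k)^* * \sum_j U m0 j = 1.
  rewrite -(eigvec_sum_conj k) [RHS](bigD1 m0) //= [X in _ = _ + X]big1 ?addr0 // => m ne.
  by rewrite eigvec_sum_eq0 ?mulr0 // simple0.
have sum_neq0 : \sum_j U m0 j != 0.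
  by apply: contra_eq_neq (conj_sum m0) => ->; rewrite mulr0 eq_sym oner_neq0.
have const k : U m0 k = U m0 m0.
  by apply: (can_inj conjCK); apply: (mulIf sum_neq0); rewrite !conj_sum.
have wconst k l : eigweight L m0 k l = eigweight L m0 m0 m0.
  by rewrite /eigweight (const k) (const l).
have N0 : (N%:R : R) != 0.
  by rewrite pnatr_eq0 -lt0n (leq_ltn_trans (leq0n m0) (ltn_ord m0)).
have := eigweight_trace L m0; under eq_bigr do rewrite wconst.
rewrite sumr_const card_ord wconst => trace1.
by apply: (mulfI N0); rewrite mulfV // -[RHS]trace1 mulr_natl.
Qed.

End ZeroRowSums.

Lemma sorted_second_pos (R : realType) (s : seq R) :
  sorted <=%R s -> 0 < nth 0 s 1 -> 0 \in s ->
  count_mem 0 s = 1%N /\ {in s, forall a, a != 0 -> nth 0 s 1 <= a}.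
Proof.
case: s => [|x0 [|x1 s]] //=; rewrite ?ltxx // => /andP[_ path1] x1_pos in0.
have ge_x1 a : a \in x1 :: s -> x1 <= a.
  by rewrite inE => /predU1P[-> //|]; apply/allP/(order_path_min le_trans path1).
have x0_eq0 : x0 = 0.
  by move: in0; rewrite inE => /predU1P[//|/ge_x1]; rewrite leNgt x1_pos.
have notin0 : 0 \notin x1 :: s by apply/negP => /ge_x1; rewrite leNgt x1_pos.
split; first by have := count_memPn notin0; rewrite /= x0_eq0 eqxx => ->.
by move=> a; rewrite inE => /predU1P[-> | /ge_x1 //]; rewrite x0_eq0 eqxx.
Qed.

Lemma lambda2_spectrum (R : realType) N (L : 'M[R]_N) lam :
  L^T = L -> (forall i, \sum_j L i j = 0) -> is_lambda2 L lam -> 0 < lam ->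
  exists2 m0, (forall m, (eigval L m == 0) = (m == m0))
            & (forall m, m != m0 -> lam <= eigval L m).
Proof.
move=> Lsym Lrow [s [size_s sorted_s char_s s1]] lam_pos.
have perm_s : perm_eq s [seq eigval L m | m <- index_enum 'I_N].
  by apply: prod_XsubC_eq; rewrite -char_s char_poly_eigval // big_map.
have N_gt0 : (0 < N)%N.
  rewrite lt0n; apply: contraTneq lam_pos => N0.
  by rewrite -s1 nth_default ?size_s ?N0 ?ltxx.
have [m1 eig_m1] := exists_eigval_eq0 Lsym Lrow N_gt0.
have in0 : 0 \in s by rewrite (perm_mem perm_s) -eig_m1 map_f ?mem_index_enum.
have s1_pos : 0 < nth 0 s 1 by rewrite s1.
have [count0 ge_lam] := sorted_second_pos sorted_s s1_pos in0.
have /card1P[m0 zeros] : #|[pred m | eigval L m == 0]| == 1%N.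
  by rewrite -count0 (permP perm_s) count_map -sum1_count -sum1_card.
have simple0 m : (eigval L m == 0) = (m == m0) by have := zeros m; rewrite !inE.
exists m0 => // m ne; rewrite -s1 ge_lam ?(perm_mem perm_s) ?map_f ?mem_index_enum //.
by rewrite simple0.
Qed.

Section Laplacian.
Variables (R : realType) (N : nat) (e : rel 'I_N).
Hypothesis e_simple : simple_graph e.

Lemma laplacian_sym : (laplacian R e)^T = laplacian R e.
Proof.
case: e_simple => esym _; apply/matrixP => i j; rewrite !mxE eq_sym esym.
by case: eqP => // ->.
Qed.

Lemma laplacian_row_sum i : \sum_j laplacian R e i j = 0.
Proof.
case: e_simple => _ eirr.
rewrite (bigD1 i) //= mxE eqxx.
under eq_bigr => j ji do rewrite mxE eq_sym (negbTE ji).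
have -> : \sum_(j | j != i) - ((e i j)%:R : R) = - \sum_j (e i j)%:R.
  by rewrite sumrN [in RHS](bigD1 i) //= (negbTE (eirr i)) add0r.
rewrite -natr_sum [in X in X - _](_ : #|_| = \sum_j e i j)%N ?subrr //.
rewrite -sum1_card big_mkcond /=; apply: eq_bigr => j _.
by rewrite unfold_in /in_set /= asboolb; case: (e i j).
Qed.

Hypothesis e_complete : complete_graph e.

Lemma laplacian_complete : laplacian R e = N%:R%:M - const_mx 1.
Proof.
have deg i : #|[set k | e i k]| = N.-1.
  rewrite -[N in RHS]card_ord -(cardC1 i); apply: eq_card => k.
  rewrite unfold_in /in_set /= asboolb !inE.
  case: (eqVneq k i) => [->|ki]; first by rewrite (negbTE (e_simple.2 i)).
  by rewrite e_complete 1?eq_sym.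
apply/matrixP => i j; rewrite !mxE deg.
case: (eqVneq i j) => [_|ij]; last by rewrite e_complete // sub0r.
case: N i {j deg} => [[]//|n _] /=; rewrite mulrS; ring.
Qed.

End Laplacian.

Lemma const_mx1_mulmx (R : pzRingType) m n p :
  (const_mx 1 : 'M[R]_(m, n)) *m (const_mx 1 : 'M[R]_(n, p)) = n%:R *: const_mx 1.
Proof.
apply/matrixP => i j; rewrite !mxE.
by under eq_bigr do rewrite !mxE mulr1; rewrite sumr_const card_ord mulr1.
Qed.

Section CompleteSpectrum.
Variables (R : realType) (N : nat) (L : 'M[R]_N).
Hypotheses (Lsym : L^T = L) (N_gt0 : (0 < N)%N).
Hypothesis L_complete : L = N%:R%:M - const_mx 1.

Lemma complete_spectrum : exists2 m0, (forall m, (eigval L m == 0) = (m == m0))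
                                    & (forall m, m != m0 -> eigval L m = N%:R).
Proof.
have eig_cases : forall m, eigval L m = 0 \/ eigval L m = N%:R.
  apply: eigval_sqr_scale => //.
  rewrite L_complete mulmxBl !mulmxBr mul_scalar_mx mul_mx_scalar const_mx1_mulmx.
  by rewrite scalerBr scale_scalar_mx subrr subr0 mul_scalar_mx.
have N0 : (N%:R : R) != 0 by rewrite pnatr_eq0 -lt0n.
have sum_nz : \sum_m eigval L m = N%:R *+ #|[predC [pred m | eigval L m == 0]]|.
  rewrite -sumr_const [RHS]big_mkcond; apply: eq_bigr => m _; rewrite !inE.
  by case: (eig_cases m) => ->; rewrite ?eqxx // (negbTE N0).
have trace_L : \tr L = N%:R *+ N.-1.
  rewrite L_complete raddfB /= mxtrace_scalar /mxtrace.
  under eq_bigr do rewrite mxE.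
  by apply/eqP; rewrite sumr_const card_ord subr_eq -mulrSr prednK.
have card_nz : #|[predC [pred m | eigval L m == 0]]| = N.-1.
  apply/eqP; rewrite -(eqn_pmul2l N_gt0) -(eqr_nat R) !natrM !mulr_natr.
  by rewrite -sum_nz sum_eigval // trace_L.
have /card1P[m0 zeros] : #|[pred m | eigval L m == 0]| == 1%N.
  by rewrite -(eqn_add2r N.-1) -{1}card_nz cardC card_ord add1n prednK.
have simple0 m : (eigval L m == 0) = (m == m0) by have := zeros m; rewrite !inE.
exists m0 => // m ne.
by case: (eig_cases m) => // /eqP; rewrite simple0 (negbTE ne).
Qed.

Lemma complete_lambda2 : (2 <= N)%N -> is_lambda2 L N%:R.
Proof.
move=> N_ge2; have [m0 simple0 eigN] := complete_spectrum.
exists (0 :: nseq N.-1 N%:R); split.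
- by rewrite /= size_nseq prednK.
- rewrite /=; case: N.-1 => [|n] //=; rewrite ler0n /=.
  by elim: n => //= n ->; rewrite lexx.
- have eig_m0 : eigval L m0 = 0 by apply/eqP; rewrite simple0.
  rewrite char_poly_eigval // big_cons big_nseq -Monoid.iteropE (bigD1 m0) //= eig_m0.
  rewrite (eq_bigr (fun=> 'X - N%:R%:P)) => [|m /eigN -> //].
  by rewrite prodr_const cardC1 card_ord.
- by rewrite /= nth_nseq -ltnS prednK // N_ge2.
Qed.

End CompleteSpectrum.

Lemma sumr_neq (V : zmodType) (I : finType) (k : I) (f : I -> V) :
  \sum_(i | i != k) f i = \sum_i f i - f k.
Proof. by rewrite [\sum_i f i](bigD1 k) //= addrC addrK. Qed.

Section ScaledDeviation.
Variables (R : realType) (N : nat) (L : 'M[R]_N).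

Definition devmx (g t : R) : 'M[R]_N :=
  expR (g * t) *: (expm (- (t *: L)) - avg_mx R N).

Lemma Gamma_inf_ge_devmx0 g : ((norm_inf (devmx g 0))%:E <= Gamma_inf L g)%E.
Proof. by apply: ereal_sup_ubound; exists 0 => //=. Qed.

Lemma Gamma_inf_le g c :
  (forall t, 0 <= t -> norm_inf (devmx g t) <= c) -> (Gamma_inf L g <= c%:E)%E.
Proof. by move=> H; apply: ge_ereal_sup => _ [t t0 <-]; rewrite lee_fin H. Qed.

Hypotheses (Lsym : L^T = L) (Lrow : forall i, \sum_j L i j = 0).
Variable m0 : 'I_N.
Hypothesis simple0 : forall m, (eigval L m == 0) = (m == m0).

Let eigval_m0 : eigval L m0 = 0. Proof. by apply/eqP; rewrite simple0. Qed.
Let eigweight_m0 := eigweight_kernel Lsym Lrow simple0.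
Let N_gt0 : (0 < N)%N := leq_ltn_trans (leq0n m0) (ltn_ord m0).
Let N0 : (N%:R : R) != 0. Proof. by rewrite pnatr_eq0 -lt0n. Qed.

Lemma devmx_entry g t i j : devmx g t i j =
  expR (g * t) * \sum_(m | m != m0) eigweight L m i j * expR (- t * eigval L m).
Proof.
rewrite /devmx expm_spectral // !mxE (bigD1 m0) //= eigval_m0 mulr0 expR0.
by rewrite mulr1 eigweight_m0 [N%:R^-1 + _]addrC addrK.
Qed.

Lemma devmx0_entry g i j : devmx g 0 i j = (i == j)%:R - N%:R^-1.
Proof.
rewrite /devmx expm_spectral // !mxE mulr0 expR0 mul1r.
by under eq_bigr do rewrite oppr0 mul0r expR0 mulr1; rewrite eigweight_sum.
Qed.

Lemma devmx0_row_sum g i : \sum_j `|devmx g 0 i j| = 2 - 2 / N%:R.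
Proof.
have invN_ge0 : 0 <= (N%:R^-1 : R) by rewrite invr_ge0 ler0n.
have invN_le1 : N%:R^-1 <= (1 : R) by rewrite invf_le1 ?ltr0n // ler1n.
rewrite (bigD1 i) //= devmx0_entry eqxx.
under eq_bigr => j ji do rewrite devmx0_entry eq_sym (negbTE ji) sub0r normrN.
rewrite sumr_neq sumr_const card_ord (ger0_norm invN_ge0) ger0_norm ?subr_ge0 //.
by rewrite -[N%:R^-1 *+ N]mulr_natr mulVf //= mulr1n; lra.
Qed.

Lemma abs_devmx_le g t lam i j :
  (forall m, m != m0 -> lam <= eigval L m) -> g <= lam -> 0 <= t ->
  `|devmx g t i j| <= \sum_(m | m != m0) (eigweight L m i i + eigweight L m j j) / 2.
Proof.
move=> gap g_le t0; rewrite devmx_entry normrM ger0_norm ?expR_ge0 //.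
apply: le_trans (ler_wpM2l (expR_ge0 _) (ler_norm_sum _ _ _)) _.
rewrite mulr_sumr; apply: ler_sum => m ne.
rewrite normrM (ger0_norm (expR_ge0 _)) mulrCA -expRD.
apply: le_trans (abs_eigweight_le L m i j).
rewrite -[X in _ <= X]mulr1 ler_wpM2l // expR_le1.
by have := gap m ne; nra.
Qed.

Lemma devmx_row_sum_le g t lam i :
  (forall m, m != m0 -> lam <= eigval L m) -> g <= lam -> 0 <= t ->
  \sum_j `|devmx g t i j| <= N%:R - 1.
Proof.
move=> gap g_le t0.
apply: le_trans (ler_sum _ (fun j _ => abs_devmx_le i j gap g_le t0)) _.
rewrite exchange_big /=.
under eq_bigr => m _ do
  rewrite -mulr_suml big_split /= sumr_const card_ord eigweight_trace //.
rewrite -mulr_suml big_split /= sumr_neq sumrMnl eigweight_sum eqxx.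
rewrite eigweight_m0 sumr_neq sumr_const card_ord /= mulr1n.
by rewrite -[N%:R^-1 *+ N]mulr_natr mulVf //; lra.
Qed.

Lemma Gamma_inf_bounds lam g :
  (forall m, m != m0 -> lam <= eigval L m) -> g <= lam ->
  ((2 - 2 / N%:R)%:E <= Gamma_inf L g)%E /\ (Gamma_inf L g <= (N%:R - 1)%:E)%E.
Proof.
move=> gap g_le; split.
  apply: le_trans (Gamma_inf_ge_devmx0 g); rewrite lee_fin -(devmx0_row_sum g m0).
  exact: row_sum_le_norm_inf.
apply: Gamma_inf_le => t t0; apply: norm_inf_le => [|i].
  by rewrite subr_ge0 ler1n.
exact: devmx_row_sum_le gap g_le t0.
Qed.

Hypothesis eigval_N : forall m, m != m0 -> eigval L m = N%:R.

Lemma devmx_flat_spectrum g t : devmx g t = expR ((g - N%:R) * t) *: devmx g 0.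
Proof.
apply/matrixP => i j; rewrite devmx_entry mxE devmx0_entry.
rewrite (eq_bigr (fun m => eigweight L m i j * expR (- t * N%:R))) => [|m /eigval_N -> //].
rewrite -big_distrl /= sumr_neq eigweight_sum eigweight_m0 mulrCA -expRD mulrC.
by congr (expR _ * _); ring.
Qed.

Lemma Gamma_inf_flat_spectrum g : g <= N%:R -> Gamma_inf L g = (2 - 2 / N%:R)%:E.
Proof.
move=> g_le; have gap m : m != m0 -> N%:R <= eigval L m by move/eigval_N ->.
have [lb _] := Gamma_inf_bounds gap g_le.
apply/le_anti; rewrite lb andbT; apply: Gamma_inf_le => t t0.
have row0_ge0 : 0 <= 2 - 2 / N%:R :> R by rewrite -(devmx0_row_sum g m0) sumr_ge0.
rewrite devmx_flat_spectrum; apply: norm_inf_le => // i.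
under eq_bigr do rewrite mxE normrM (ger0_norm (expR_ge0 _)).
rewrite -mulr_sumr devmx0_row_sum ler_piMl // expR_le1.
by rewrite mulr_le0_ge0 ?subr_le0.
Qed.

End ScaledDeviation.

Theorem proposition2 (R : realType) (N : nat) (e : rel 'I_N) :
  (2 <= N)%N -> simple_graph e -> connected_graph e ->
  (forall lam2 : R, is_lambda2 (laplacian R e) lam2 ->
     forall gamma : R, 0 < gamma -> gamma <= lam2 ->
       ((2 - 2 / N%:R)%:E <= Gamma_inf (laplacian R e) gamma)%E /\
       (Gamma_inf (laplacian R e) gamma <= (N%:R - 1)%:E)%E) /\
  (complete_graph e ->
     is_lambda2 (laplacian R e) N%:R /\
     forall gamma : R, 0 < gamma -> gamma <= N%:R ->
       Gamma_inf (laplacian R e) gamma = (2 - 2 / N%:R)%:E).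
Proof.
move=> N_ge2 e_simple _.
have Lsym := laplacian_sym R e_simple.
have Lrow := laplacian_row_sum R e_simple.
split=> [lam lam2 g g_gt0 g_le | e_complete].
  have [m0 simple0 gap] := lambda2_spectrum Lsym Lrow lam2 (lt_le_trans g_gt0 g_le).
  exact (Gamma_inf_bounds Lsym Lrow simple0 gap g_le).
have N_gt0 : (0 < N)%N by apply: leq_trans N_ge2.
have L_complete := laplacian_complete R e_simple e_complete.
have [m0 simple0 eigN] := complete_spectrum Lsym N_gt0 L_complete.
split; first exact: complete_lambda2.
by move=> g _; apply: Gamma_inf_flat_spectrum.
Qed.
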